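(* Let $\bar f=(f_1,\dots,f_n)$, $\bar b=(b_1,\dots,b_m)$ be frame sequences with a distance $d$ satisfying the triangle inequality, such that $d(f_i,f_{i+1})\le\delta$ for $1\le i<n$, $d(b_j,b_{j+1})\le\delta$ for $1\le j<m$, and for every $i$ there is $j$ with $d(f_i,b_j)\le\epsilon$. Suppose $k=\epsilon/\delta$ is an integer with $1\le k\le\min\{n,m\}$. Then Algorithm Near-Linear($k$) returns a matching $\pi$ with cost $C(\pi)=O(\epsilon)$, and runs $k^2$ times faster than the naive $\Theta(mn)$ algorithm, i.e. in time $O(\frac{nm}{k^2})=O(\frac{nm\delta^2}{\epsilon^2})$.
   Context: For $\pi:\{1,\dots,n\}\to\{1,\dots,m\}$, $C(\pi)=\frac1n\sum_{i=1}^n d(f_i,b_{\pi(i)})$. The naive algorithm computes $d(f_i,b_j)$ for all pairs and picks, for each $i$, the minimizing $j$. Algorithm Near-Linear($k$): let $S_i^k=\{i:1\le i\le n,\ i\equiv 0 \bmod k\}\cup\{1\}\cup\{n\}$ and $S_j^k=\{j:1\le j\le m,\ j\equiv0\bmod k\}\cup\{1\}\cup\{m\}$; for $i\in S_i^k$ set $\pi(i)=\arg\min_{j\in S_j^k} d(f_i,b_j)$; for $i\notin S_i^k$ let $near(i)=\arg\min_{t\in S_i^k}|t-i|$ and set $\pi(i)=\pi(near(i))$. Running time counts each evaluation of $d$ as one step. *)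

From mathcomp Require Import all_boot all_order all_algebra.
Set Implicit Arguments. Unset Strict Implicit. Unset Printing Implicit Defensive.
Import Order.TTheory GRing.Theory Num.Theory.
Local Open Scope ring_scope.

(* Indices are 1-based natural numbers: frames f 1 .. f n, b 1 .. b m. *)

Definition inS (N k i : nat) : bool :=
  ((1 <= i) && (i <= N))%N && [|| (k %| i)%N, i == 1%N | i == N].

Definition cardS (N k : nat) : nat := count (inS N k) (iota 1 N).

Definition distn (a b : nat) : nat := ((a - b) + (b - a))%N.

Definition is_distance (R : realFieldType) (T : Type) (d : T -> T -> R) : Prop :=
  (forall x y, 0 <= d x y) /\ (forall x y, d x y = d y x) /\
  (forall x y z, d x z <= d x y + d y z).

(* pi is a possible output of Algorithm Near-Linear(k) (arbitrary tie-breaking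
   in both argmins). *)
Definition near_linear_output (R : realFieldType) (T : Type) (d : T -> T -> R)
    (n m k : nat) (f b : nat -> T) (pi : nat -> nat) : Prop :=
  (forall i, inS n k i ->
     inS m k (pi i) /\ (forall j, inS m k j -> d (f i) (b (pi i)) <= d (f i) (b j)))
  /\
  (forall i, (1 <= i <= n)%N -> ~~ inS n k i ->
     exists t, [/\ inS n k t,
                   (forall t', inS n k t' -> (distn t i <= distn t' i)%N)
                 & pi i = pi t]).

Definition cost (R : realFieldType) (T : Type) (d : T -> T -> R)
    (n : nat) (f b : nat -> T) (pi : nat -> nat) : R :=
  (\sum_(1 <= i < n.+1) d (f i) (b (pi i))) / n%:R.

(* Running time of Near-Linear(k): number of evaluations of d,
   one for each pair (i, j) in S^k_n x S^k_m. *)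
Definition near_linear_time (n m k : nat) : nat := (cardS n k * cardS m k)%N.

From mathcomp Require Import all_boot all_order all_algebra.
From mathcomp Require Import zify lra.
Import Order.TTheory GRing.Theory Num.Theory.

Set Implicit Arguments.
Unset Strict Implicit.
Unset Printing Implicit Defensive.

(* Every index lies within distance < k of a sample index, since sample
   indices (multiples of k, together with the endpoint 1) are spaced at most k
   apart.  The path hypotheses and the triangle inequality turn an index gap
   below k into a distance at most k delta = eps.  Hence a sampled frame f_t is
   matched within 2 eps (eps to some b_j, plus at most eps from b_j to the
   nearest sampled b), and any other frame f_i, copying the match of its
   nearest sample t, within 3 eps.  For the running time, a sample set of
   [1, N] has at most N/k + 2 elements, so |S_n| |S_m| k^2 <= 9 n m. *)

Lemma count_predU_le (T : Type) (a1 a2 : pred T) (s : seq T) :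
  (count (predU a1 a2) s <= count a1 s + count a2 s)%N.
Proof. by rewrite -count_predUI leq_addr. Qed.

Lemma count_dvdn_iota k N : (0 < k)%N ->
  count (dvdn k) (iota 1 N) = N %/ k.
Proof.
move=> k_gt0; elim: N => [|N IH]; first by rewrite div0n.
by rewrite -[N.+1]addn1 iotaD count_cat IH /= addn1 divnS // addn0 addnC.
Qed.

Lemma cardS_le N k : (0 < k)%N -> (cardS N k <= N %/ k + 2)%N.
Proof.
move=> k_gt0; rewrite /cardS -(count_dvdn_iota N k_gt0).
have sub_inS : subpred (inS N k) (predU (dvdn k) (predU (pred1 1%N) (pred1 N))).
  by move=> i /andP[_]; rewrite /= orbA.
apply: leq_trans (sub_count sub_inS _) _.
apply: leq_trans (count_predU_le _ _ _) _; rewrite leq_add2l.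
apply: leq_trans (count_predU_le _ _ _) _.
by apply: (@leq_add _ _ 1 1); rewrite count_uniq_mem ?iota_uniq ?leq_b1.
Qed.

Lemma cardS_mul_le N k : (0 < k)%N -> (k <= N)%N -> (cardS N k * k <= 3 * N)%N.
Proof.
move=> k_gt0 kN.
have := leq_mul (cardS_le N k_gt0) (leqnn k); have := leq_divM N k; lia.
Qed.

Lemma near_linear_time_le n m k : (0 < k)%N -> (k <= minn n m)%N ->
  (near_linear_time n m k * k ^ 2 <= 9 * (n * m))%N.
Proof.
rewrite leq_min => k_gt0 /andP[kn km].
rewrite /near_linear_time expnS expn1 mulnACA.
have := leq_mul (cardS_mul_le k_gt0 kn) (cardS_mul_le k_gt0 km); lia.
Qed.

Lemma distnC a b : distn a b = distn b a.
Proof. by rewrite /distn addnC. Qed.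

Lemma inS_near N k j : (0 < k)%N -> (1 <= j <= N)%N ->
  exists2 t, inS N k t & (distn t j < k)%N.
Proof.
move=> k_gt0 /andP[j_ge1 jN].
have j_eq := divn_eq j k; have j_mod := ltn_pmod j k_gt0.
have [q0|q_gt0] := posnP (j %/ k).
  exists 1%N; first by rewrite /inS eqxx orbT andbT; lia.
  by rewrite /distn; rewrite q0 in j_eq; lia.
exists (j %/ k * k)%N; last by rewrite /distn; lia.
rewrite /inS dvdn_mull // andbT; have := leq_divM j k.
have : (1 * k <= j %/ k * k)%N by rewrite leq_mul2r q_gt0 orbT.
lia.
Qed.

Local Open Scope ring_scope.

Section PathDistance.

Variables (R : realFieldType) (T : Type) (d : T -> T -> R).
Hypothesis d_dist : is_distance d.
Variables (g : nat -> T) (N : nat) (delta : R).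
Hypothesis g_step : forall i, (1 <= i < N)%N -> d (g i) (g i.+1) <= delta.

Lemma path_dist_le a e : (1 <= a)%N -> (a + e.+1 <= N)%N ->
  d (g a) (g (a + e.+1)%N) <= e.+1%:R * delta.
Proof.
have [_ [_ d_tri]] := d_dist.
move=> a_ge1; elim: e => [|e IH] aeN; first by rewrite addn1 mul1r g_step //; lia.
apply: le_trans (d_tri _ (g (a + e.+1)%N) _) _.
rewrite [e.+2%:R]mulrSr mulrDl mul1r lerD ?IH //; first lia.
by rewrite !addnS g_step //; lia.
Qed.

(* [is_distance] does not force [d x x = 0], hence [a != c]. *)
Lemma path_dist_distn a c : (1 <= a <= N)%N -> (1 <= c <= N)%N -> a != c ->
  d (g a) (g c) <= (distn a c)%:R * delta.
Proof.
have [_ [d_sym _]] := d_dist.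
wlog lt_ac : a c / (a < c)%N.
  move=> hwlog ha hc; rewrite neq_ltn => /orP[lt_ac|lt_ca].
    by apply: hwlog; rewrite // ltn_eqF.
  by rewrite d_sym distnC hwlog // ltn_eqF.
move=> /andP[a_ge1 _] /andP[_ cN] _.
have c_def : c = (a + (c - a).-1.+1)%N by lia.
have -> : distn a c = (c - a).-1.+1 by rewrite /distn; lia.
by rewrite [in g c]c_def path_dist_le //; lia.
Qed.

End PathDistance.

Section NearLinearCost.

Variables (R : realFieldType) (T : Type) (d : T -> T -> R).
Hypothesis d_dist : is_distance d.
Variables (n m k : nat) (f b : nat -> T) (delta eps : R).
Hypothesis delta_gt0 : 0 < delta.
Hypothesis f_step : forall i, (1 <= i < n)%N -> d (f i) (f i.+1) <= delta.
Hypothesis b_step : forall j, (1 <= j < m)%N -> d (b j) (b j.+1) <= delta.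
Hypothesis f_covered : forall i, (1 <= i <= n)%N ->
  exists j, (1 <= j <= m)%N /\ d (f i) (b j) <= eps.
Hypothesis eps_def : eps = k%:R * delta.
Hypothesis k_gt0 : (0 < k)%N.
Variable pi : nat -> nat.
Hypothesis pi_out : near_linear_output d n m k f b pi.

Let gap_le_eps x : (x <= k)%N -> x%:R * delta <= eps.
Proof. by move=> xk; rewrite eps_def ler_wpM2r ?ler_nat // ltW. Qed.

Lemma sample_cost_le i : inS n k i -> d (f i) (b (pi i)) <= eps + eps.
Proof.
have [_ [_ d_tri]] := d_dist; have [pi_sample _] := pi_out.
move=> iS; have [_ pi_min] := pi_sample i iS.
have [j [jm fb_j]] := f_covered (proj1 (andP iS)).
have [jS|jNS] := boolP (inS m k j).
  by have := pi_min j jS; have := gap_le_eps (leq0n k); lra.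
have [t tS tj] := inS_near k_gt0 jm.
have jt : j != t by apply: contraNneq jNS => ->.
have bjt := path_dist_distn d_dist b_step jm (proj1 (andP tS)) jt.
rewrite distnC in bjt; have := gap_le_eps (ltnW tj).
have := pi_min t tS; have := d_tri (f i) (b j) (b t); lra.
Qed.

Lemma frame_cost_le i : (1 <= i <= n)%N -> d (f i) (b (pi i)) <= eps + eps + eps.
Proof.
have [_ [_ d_tri]] := d_dist; have [_ pi_copy] := pi_out.
move=> i_n; have [iS|iNS] := boolP (inS n k i).
  by have := sample_cost_le iS; have := gap_le_eps (leq0n k); lra.
have [t [tS t_nearest ->]] := pi_copy i i_n iNS.
have [t' t'S t'i] := inS_near k_gt0 i_n.
have ti : (distn t i < k)%N := leq_ltn_trans (t_nearest t' t'S) t'i.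
have it : i != t by apply: contraNneq iNS => ->.
have fit := path_dist_distn d_dist f_step i_n (proj1 (andP tS)) it.
rewrite distnC in fit; have := gap_le_eps (ltnW ti).
have := sample_cost_le tS; have := d_tri (f i) (f t) (b (pi t)); lra.
Qed.

Lemma cost_le : (0 < n)%N -> cost d n f b pi <= 3%:R * eps.
Proof.
move=> n_gt0; rewrite /cost ler_pdivrMr ?ltr0n //.
apply: le_trans (ler_sum_nat (G := fun=> eps + eps + eps) _) _.
  by move=> i /andP[i_ge1 i_lt]; apply: frame_cost_le; rewrite i_ge1 -ltnS.
rewrite sumr_const_nat subn1 /= -mulr_natr.
by have := ler0n R n; have := gap_le_eps (leq0n k); nra.
Qed.

End NearLinearCost.

Theorem corollary3p3 :
  exists c : nat,
  forall (R : realFieldType) (T : Type) (d : T -> T -> R)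
         (n m k : nat) (f b : nat -> T) (delta eps : R),
    is_distance d ->
    0 < delta ->
    (forall i, (1 <= i < n)%N -> d (f i) (f i.+1) <= delta) ->
    (forall j, (1 <= j < m)%N -> d (b j) (b j.+1) <= delta) ->
    (forall i, (1 <= i <= n)%N ->
       exists j, (1 <= j <= m)%N /\ d (f i) (b j) <= eps) ->
    eps = k%:R * delta ->
    (1 <= k)%N -> (k <= minn n m)%N ->
    (forall pi, near_linear_output d n m k f b pi ->
       cost d n f b pi <= c%:R * eps)
    /\ (near_linear_time n m k * k ^ 2 <= c * (n * m))%N.
Proof.
exists 9%N => R T d n m k f b delta eps d_dist delta_gt0 f_step b_step
  f_covered eps_def k_gt0 k_min.
split; last exact: near_linear_time_le.
have n_gt0 : (0 < n)%N by move: k_min; rewrite leq_min; lia.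
have eps_ge0 : 0 <= eps by rewrite eps_def mulr_ge0 // ltW.
move=> pi pi_out; apply: le_trans (cost_le d_dist delta_gt0 f_step b_step
  f_covered eps_def k_gt0 pi_out n_gt0) _.
by rewrite ler_wpM2r // ler_nat.
Qed.
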